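(* Let $X$ be a real Banach space and $h:X\times X^*\to\mathbb{R}\cup\{\pm\infty\}$ a convex function with $h(x,x^* )\geq\langle x,x^*\rangle$ for all $(x,x^* )\in X\times X^*$. Then $$P_2(D(h))\subseteq\mathrm{cl}_{w*}P_1(D(h^* )),\qquad P_1(D(h))\subseteq\mathrm{cl}_{w*}P_2(D(h^* )),$$ where the first closure is the weak-$*$ closure in $X^*$ and the second is the weak-$*$ closure in $X^{**}$.
   Context: $X$ is identified with its canonical image in $X^{**}$. $P_1,P_2$ are the canonical projections of a Cartesian product onto its factors; $D(f)=\{z\;|\;f(z)<\infty\}$. The conjugate of $h$ is $h^*:X^*\times X^{**}\to\mathbb{R}\cup\{\pm\infty\}$, $h^*(x^*,x^{**})=\sup_{(y,y^* )\in X\times X^*}\langle y,x^*\rangle+\langle x^{**},y^*\rangle-h(y,y^* )$. *)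

From HB Require Import structures.
From mathcomp Require Import all_boot all_order all_algebra.
From mathcomp Require Import all_classical all_reals all_analysis.
Set Implicit Arguments. Unset Strict Implicit. Unset Printing Implicit Defensive.
Import Order.TTheory GRing.Theory Num.Theory.
Import numFieldNormedType.Exports.
Local Open Scope classical_set_scope.
Local Open Scope ring_scope.

Definition is_lin (R : realType) (X : normedModType R) (f : X -> R) : Prop :=
  forall (a : R) (x y : X), f (a *: x + y) = a * f x + f y.

Record dual (R : realType) (X : normedModType R) := Dual {
  dual_fun :> X -> R;
  dual_lin : is_lin dual_fun;
  dual_cont : continuous dual_fun }.

Definition dual_norm (R : realType) (X : normedModType R) (f : dual X) : R :=
  sup [set `|f x| | x in [set x : X | `|x| <= 1]].

(* The bidual X^** : linear functionals on X^* bounded w.r.t. the dual norm.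
   Since dual X carries no vector structure here, linearity is phrased
   through pointwise linear combinations. *)
Record bidual (R : realType) (X : normedModType R) := Bidual {
  bid_fun :> dual X -> R;
  bid_lin : forall (a : R) (f g h : dual X),
      (forall x, h x = a * f x + g x) -> bid_fun h = a * bid_fun f + bid_fun g;
  bid_bdd : exists C : R, forall f : dual X, `|bid_fun f| <= C * dual_norm f }.

Definition convex_fun (R : realType) (X : normedModType R)
    (h : X * dual X -> \bar R) : Prop :=
  forall (x1 x2 : X) (f1 f2 f : dual X) (t r1 r2 : R),
    0 <= t <= 1 ->
    (forall y, f y = t * f1 y + (1 - t) * f2 y) ->
    (h (x1, f1) <= r1%:E)%E -> (h (x2, f2) <= r2%:E)%E ->
    (h ((t *: x1 + (1 - t) *: x2)%R, f) <= (t * r1 + (1 - t) * r2)%:E)%E.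

Definition fconj (R : realType) (X : normedModType R)
    (h : X * dual X -> \bar R) : dual X * bidual X -> \bar R :=
  fun p => ereal_sup [set z | exists (y : X) (g : dual X),
                        z = ((p.1 y + p.2 g)%:E - h (y, g))%E].

Definition dom (T : Type) (R : realType) (f : T -> \bar R) : set T :=
  [set z | (f z < +oo)%E].

(* Weak-* closure in X^* (topology sigma(X^{*}, X)), via its basic neighbourhoods. *)
Definition wstar_cl (R : realType) (X : normedModType R) (A : set (dual X))
    : set (dual X) :=
  [set f | forall (n : nat) (xs : 'I_n -> X) (e : R), 0 < e ->
     exists2 g, A g & forall i, `|g (xs i) - f (xs i)| < e].

(* Membership of a functional phi on X^* in the weak-* closure (topology
   sigma(X^{**}, X^{*})) of A subset X^{**}; used with phi = canonical image of x in X. *)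
Definition in_wstar_cl_bid (R : realType) (X : normedModType R)
    (A : set (bidual X)) (phi : dual X -> R) : Prop :=
  forall (n : nat) (fs : 'I_n -> dual X) (e : R), 0 < e ->
     exists2 psi, A psi & forall i, `|psi (fs i) - phi (fs i)| < e.

From HB Require Import structures.
From mathcomp Require Import all_boot all_order all_algebra.
From mathcomp Require Import all_classical all_reals all_analysis.
From mathcomp Require Import ring lra.
Import Order.TTheory GRing.Theory Num.Theory.
Import numFieldNormedType.Exports.
Local Open Scope classical_set_scope.
Local Open Scope ring_scope.
Set Implicit Arguments. Unset Strict Implicit. Unset Printing Implicit Defensive.

(* Fix (x0, x0s) in D(h) and put delta = h (x0, x0s) - x0s x0 >= 0.  Translate
   the epigraph of h to (x0, x0s) and tilt it by the coupling: this gives a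
   convex set S of pairs (w, s), w in X * X^*, on which s >= w.2 w.1 because h
   dominates the coupling.  Convex combinations with (0, delta) improve this to
   s >= - (rho |w.1| + delta/rho |w.2|) - delta/rho for every 0 < rho <= 1
   (and symmetrically in w.1, w.2).  A Hahn-Banach sandwich argument gives a
   linear l on X * X^* below this seminorm and below S, and then
   (x0s + l (., 0), x0 + l (0, .)) lies in the domain of the conjugate, with
   first (resp. second) component rho-close to x0s (resp. x0) in norm. *)

Section DualSpace.
Variables (R : realType) (X : normedModType R).
Implicit Types (f g : dual X) (x : X).

HB.instance Definition _ f :=
  GRing.isLinear.Build R X R *%R (dual_fun f) (dual_lin f).

Lemma dual_ext f g : f =1 g -> f = g.
Proof.
case: f g => f fl fc [g gl gc] /= /funext fg; subst g.
by congr Dual; exact: Prop_irrelevance.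
Qed.

Fact dual_zero_lin : is_lin (fun _ : X => 0 : R).
Proof. by move=> a x y; rewrite mulr0 addr0. Qed.

Fact dual_add_lin f g : is_lin (fun x => f x + g x).
Proof. by move=> a x y; rewrite !linearP mulrDr addrACA. Qed.

Fact dual_scale_lin (a : R) f : is_lin (fun x => a * f x).
Proof. by move=> b x y; rewrite linearP mulrDr mulrCA. Qed.

Definition dual_zero : dual X := Dual dual_zero_lin (@cst_continuous _ _ _).

Definition dual_add f g : dual X :=
  Dual (dual_add_lin f g)
    (fun x => continuousD (@dual_cont _ _ f x) (@dual_cont _ _ g x)).

Definition dual_scale (a : R) f : dual X :=
  Dual (dual_scale_lin a f)
    (fun x => continuousM (@cst_continuous _ _ a x) (@dual_cont _ _ f x)).

Definition dual_opp f : dual X := dual_scale (-1) f.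

Fact dual_addA : associative dual_add.
Proof. by move=> f g k; apply: dual_ext => x /=; rewrite addrA. Qed.
Fact dual_addC : commutative dual_add.
Proof. by move=> f g; apply: dual_ext => x /=; rewrite addrC. Qed.
Fact dual_add0 : left_id dual_zero dual_add.
Proof. by move=> f; apply: dual_ext => x /=; rewrite add0r. Qed.
Fact dual_addN : left_inverse dual_zero dual_opp dual_add.
Proof. by move=> f; apply: dual_ext => x /=; rewrite mulN1r addNr. Qed.

HB.instance Definition _ := gen_eqMixin (dual X).
HB.instance Definition _ := gen_choiceMixin (dual X).
HB.instance Definition _ :=
  GRing.isZmodule.Build (dual X) dual_addA dual_addC dual_add0 dual_addN.

Fact dual_scaleA a b f : dual_scale a (dual_scale b f) = dual_scale (a * b) f.
Proof. by apply: dual_ext => x /=; rewrite mulrA. Qed.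
Fact dual_scale1 : left_id 1 dual_scale.
Proof. by move=> f; apply: dual_ext => x /=; rewrite mul1r. Qed.
Fact dual_scaleDr : right_distributive dual_scale +%R.
Proof. by move=> a f g; apply: dual_ext => x /=; rewrite mulrDr. Qed.
Fact dual_scaleDl f : {morph dual_scale^~ f : a b / a + b}.
Proof. by move=> a b; apply: dual_ext => x /=; rewrite mulrDl. Qed.

HB.instance Definition _ := GRing.Zmodule_isLmodule.Build R (dual X)
  dual_scaleA dual_scale1 dual_scaleDr dual_scaleDl.

Lemma dualD f g x : (f + g) x = f x + g x. Proof. by []. Qed.
Lemma dualZ a f x : (a *: f) x = a * f x. Proof. by []. Qed.
Lemma dualN f x : (- f) x = - f x. Proof. exact: mulN1r. Qed.
Lemma dual0 x : (0 : dual X) x = 0. Proof. by []. Qed.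

Let linear_of (F : X -> R) (Flin : is_lin F) : {linear X -> R} :=
  HB.pack F (GRing.isLinear.Build _ _ _ _ F Flin).

Lemma dual_lipschitz f : exists2 C, 0 <= C & forall x, `|f x| <= C * `|x|.
Proof.
have /linear_boundedP/pinfty_ex_gt0[C C0 fC] :=
  continuous_linear_bounded 0 (f := linear_of (dual_lin f)) (@dual_cont _ _ f 0).
by exists C; [exact: ltW | exact: fC].
Qed.

Lemma is_lin_continuous (F : X -> R) (C : R) :
  is_lin F -> (forall x, `|F x| <= C * `|x|) -> continuous F.
Proof.
move=> Flin FC; apply: (@bounded_linear_continuous _ _ _ (linear_of Flin)).
apply/linear_boundedP; near=> r => x /=.
by apply: le_trans (FC x) _; apply: ler_wpM2r.
Unshelve. all: by end_near. Qed.

End DualSpace.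

Section DualNorm.
Variables (R : realType) (X : normedModType R).
Implicit Types (f g : dual X) (x : X).

Let unit_image f := [set `|f x| | x in [set x : X | `|x| <= 1]].

Let unit_image_has_sup f : has_sup (unit_image f).
Proof.
have [C C0 fC] := dual_lipschitz f.
split; first by exists `|f 0|, 0; rewrite //= normr0.
exists C => _ [x /= x1 <-]; apply: le_trans (fC x) _.
by rewrite -[leRHS]mulr1 ler_wpM2l.
Qed.

Lemma dual_norm_ub f x : `|x| <= 1 -> `|f x| <= dual_norm f.
Proof. by move=> x1; apply: sup_upper_bound (unit_image_has_sup f) _ _; exists x. Qed.

Lemma dual_norm_ge0 f : 0 <= dual_norm f.
Proof. by apply: le_trans (dual_norm_ub f (x := 0) _); rewrite ?normr0. Qed.

Lemma ler_dual_norm f x : `|f x| <= dual_norm f * `|x|.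
Proof.
have [->|x0] := eqVneq x 0; first by rewrite linear0 !normr0 mulr0.
have nx : 0 < `|x| by rewrite normr_gt0.
have := dual_norm_ub f (x := `|x|^-1 *: x).
rewrite normrZ gtr0_norm ?invr_gt0 // mulVf ?gt_eqF // lexx => /(_ isT).
by rewrite linearZ normrM gtr0_norm ?invr_gt0 // -ler_pdivlMl ?invr_gt0 // invrK mulrC.
Qed.

Lemma dual_norm_le f C : (forall x, `|x| <= 1 -> `|f x| <= C) -> dual_norm f <= C.
Proof.
move=> fC; apply: ge_sup; first by exists `|f 0|, 0; rewrite //= normr0.
by move=> _ [x /= x1 <-]; exact: fC.
Qed.

Lemma dual_norm0 : dual_norm (0 : dual X) = 0.
Proof.
apply/eqP; rewrite eq_le dual_norm_ge0 andbT.
by apply: dual_norm_le => x _; rewrite dual0 normr0.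
Qed.

Lemma ler_dual_normD f g : dual_norm (f + g) <= dual_norm f + dual_norm g.
Proof.
apply: dual_norm_le => x x1; rewrite dualD.
by apply: le_trans (ler_normD _ _) _; apply: lerD; apply: dual_norm_ub.
Qed.

Lemma ler_dual_normZ c f : 0 <= c -> dual_norm (c *: f) <= c * dual_norm f.
Proof.
move=> c0; apply: dual_norm_le => x x1.
by rewrite dualZ normrM ger0_norm // ler_wpM2l // dual_norm_ub.
Qed.

Lemma dual_normN f : dual_norm (- f) = dual_norm f.
Proof.
have dnN g : dual_norm (- g) <= dual_norm g.
  by apply: dual_norm_le => x x1; rewrite dualN normrN dual_norm_ub.
by apply/eqP; rewrite eq_le dnN /= -{1}(opprK f) dnN.
Qed.

End DualNorm.

Section Sublinear.
Variables (R : realType) (V : lmodType R).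
Implicit Types (p : V -> R) (x y : V).

Definition sublinear p :=
  (forall x y, p (x + y) <= p x + p y) /\
  (forall c x, 0 < c -> p (c *: x) <= c * p x).

Lemma sublinear0 p : sublinear p -> p 0 = 0.
Proof.
move=> [_ pZ]; have := pZ 2 0 (ltr0Sn _ 1); have := pZ 2^-1 0.
rewrite invr_gt0 ltr0Sn !scaler0 => /(_ isT); lra.
Qed.

Lemma sublinearZ p c x : sublinear p -> 0 <= c -> p (c *: x) = c * p x.
Proof.
move=> sp; rewrite le_eqVlt => /predU1P[<-|c0].
  by rewrite scale0r mul0r sublinear0.
case: sp => _ pZ; apply/eqP; rewrite eq_le pZ //=.
have := pZ c^-1 (c *: x); rewrite invr_gt0 c0 scalerA mulVf ?gt_eqF // scale1r.
by move=> /(_ isT); rewrite ler_pdivlMl.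
Qed.

Lemma sublinear_addN_ge0 p x : sublinear p -> 0 <= p x + p (- x).
Proof. by move=> sp; rewrite -(sublinear0 sp) -(subrr x); apply: sp.1. Qed.

Lemma sublinear_inf (E : V -> set R) : (forall x, has_inf (E x)) ->
  (forall x y z1 z2, E x z1 -> E y z2 -> exists2 z, E (x + y) z & z <= z1 + z2) ->
  (forall c x z, 0 < c -> E x z -> exists2 z', E (c *: x) z' & z' <= c * z) ->
  sublinear (fun x => inf (E x)).
Proof.
move=> Einf ED EZ; split=> [x y|c x c0].
- apply/ler_addgt0Pr => e e0; have e2 : 0 < e / 2 by rewrite divr_gt0.
  have [z1 Ez1 z1E] := inf_adherent e2 (Einf x).
  have [z2 Ez2 z2E] := inf_adherent e2 (Einf y).
  have [z Ez zz] := ED _ _ _ _ Ez1 Ez2.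
  have := ge_inf (Einf (x + y)).2 Ez.
  have := splitr e; lra.
- rewrite -ler_pdivrMl //; apply: lb_le_inf (Einf x).1 _ => z Ez.
  have [z' Ez' z'z] := EZ _ _ _ c0 Ez.
  rewrite ler_pdivrMl //; exact: le_trans (ge_inf (Einf _).2 Ez') z'z.
Qed.

End Sublinear.

Section HahnBanach.
Variables (R : realType) (V : lmodType R) (q : V -> R).
Hypothesis q_sublinear : sublinear q.

Let minorant := {p : V -> R | sublinear p /\ forall x, p x <= q x}.

Let dominates (p p' : minorant) : bool := `[< forall x, sval p' x <= sval p x >].

Let dominates_refl p : dominates p p. Proof. exact/asboolP. Qed.

Let dominates_trans p p' p'' : dominates p p' -> dominates p' p'' -> dominates p p''.
Proof.
by move=> /asboolP pp' /asboolP p'p''; apply/asboolP => x; apply: le_trans (pp' x).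
Qed.

Let q_minorant : minorant := exist _ q (conj q_sublinear (fun=> lexx _)).

Let sval_sublinear (p : minorant) : sublinear (sval p) := (proj2_sig p).1.

Let minorant_lbound (p : minorant) x : - q (- x) <= sval p x.
Proof.
case: p => p [sp pq] /=; have := sublinear_addN_ge0 x sp; have := pq (- x); lra.
Qed.

Let minorant_chain_bounded (A : set minorant) :
  total_on A dominates -> exists p, forall p', A p' -> dominates p' p.
Proof.
move=> Atot; pose A' := A `|` [set q_minorant].
have A'tot : total_on A' dominates.
  move=> p p' [Ap|->] [Ap'|->]; first exact: Atot.
  - by right; apply/asboolP => x; case: p {Ap} => p [].
  - by left; apply/asboolP => x; case: p' {Ap'} => p' [].
  - by left.
pose E x := [set sval p x | p in A'].
have Einf x : has_inf (E x).
  split; first by exists (q x), q_minorant => //; right.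
  by exists (- q (- x)) => _ [p _ <-]; exact: minorant_lbound.
have Eq x : E x (q x) by exists q_minorant => //; right.
have ED x y z1 z2 : E x z1 -> E y z2 -> exists2 z, E (x + y) z & z <= z1 + z2.
  move=> [p1 A'p1 <-] [p2 A'p2 <-].
  have [/asboolP p21|/asboolP p12] := A'tot _ _ A'p1 A'p2.
  - exists (sval p2 (x + y)); first by exists p2.
    by apply: le_trans ((sval_sublinear p2).1 _ _) _; rewrite lerD2r.
  - exists (sval p1 (x + y)); first by exists p1.
    by apply: le_trans ((sval_sublinear p1).1 _ _) _; rewrite lerD2l.
have EZ c x z : 0 < c -> E x z -> exists2 z', E (c *: x) z' & z' <= c * z.
  move=> c0 [p A'p <-].
  by exists (sval p (c *: x)); [exists p | exact: (sval_sublinear p).2].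
pose ip := fun x => inf (E x).
have ipq x : ip x <= q x := ge_inf (Einf x).2 (Eq x).
exists (exist _ ip (conj (sublinear_inf Einf ED EZ) ipq)) => p Ap.
by apply/asboolP => x; apply: (ge_inf (Einf x).2); exists p => //; left.
Qed.

(* For a minimal f, g x := inf_(t >= 0) (f (x + t v) - t f v) is a sublinear
   minorant of f, hence g = f, and g (- v) <= f 0 - f v. *)
Let minimal_minorantN (p : minorant) :
  premaximal dominates p -> forall v, sval p (- v) <= - sval p v.
Proof.
move=> pmax v; pose f := sval p; have sf : sublinear f := sval_sublinear p.
have fD := sf.1; have fZ0 c x : 0 <= c -> f (c *: x) = c * f x := sublinearZ x sf.
pose E x := [set f (x + t *: v) - t * f v | t in [set t : R | 0 <= t]].
have E_ge x z : E x z -> - f (- x) <= z.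
  move=> [t /= t0 <-]; have := fD (x + t *: v) (- x).
  by rewrite [x + _ + _]addrC addKr fZ0 //; lra.
have Ef x : E x (f x).
  by exists 0; [exact: lexx | rewrite scale0r addr0 mul0r subr0].
have Einf x : has_inf (E x).
  by split; [exists (f x) | exists (- f (- x)); exact: E_ge].
have ED x y z1 z2 : E x z1 -> E y z2 -> exists2 z, E (x + y) z & z <= z1 + z2.
  move=> [t1 /= t10 <-] [t2 /= t20 <-].
  exists (f (x + y + (t1 + t2) *: v) - (t1 + t2) * f v).
    by exists (t1 + t2) => //=; rewrite addr_ge0.
  have := fD (x + t1 *: v) (y + t2 *: v).
  by rewrite addrACA -scalerDl mulrDl; lra.
have EZ c x z : 0 < c -> E x z -> exists2 z', E (c *: x) z' & z' <= c * z.
  move=> c0 [t /= t0 <-]; exists (c * f (x + t *: v) - c * t * f v); last first.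
    by rewrite mulrBr mulrA.
  exists (c * t); first by rewrite /= mulr_ge0 // ltW.
  by rewrite -scalerA -scalerDr fZ0 // ltW.
pose g x := inf (E x).
have gf x : g x <= f x := ge_inf (Einf x).2 (Ef x).
have gq x : g x <= q x := le_trans (gf x) ((proj2_sig p).2 x).
pose pg : minorant := exist _ g (conj (sublinear_inf Einf ED EZ) gq).
have /asboolP/(_ (- v)) := pmax pg (asboolT gf).
move/le_trans; apply; apply: (ge_inf (Einf _).2); exists 1 => //=.
by rewrite scale1r addNr mul1r sublinear0 ?sub0r //; exact: sval_sublinear.
Qed.

Theorem hahn_banach : exists l : {scalar V}, forall x, l x <= q x.
Proof.
have [p pmax] :=
  ZL_preorder q_minorant dominates_refl dominates_trans minorant_chain_bounded.
have fN := minimal_minorantN pmax.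
case: p pmax fN => f [sf fq] _ /= fN'.
have fN v : f (- v) = - f v.
  by apply/eqP; rewrite eq_le fN' /=; have := sublinear_addN_ge0 v sf; lra.
have fD x y : f (x + y) = f x + f y.
  apply/eqP; rewrite eq_le sf.1 /=.
  by have := sf.1 (- x) (- y); rewrite -opprD !fN; lra.
have fZ a x : f (a *: x) = a * f x.
  have [a0|a0] := leP 0 a; first exact: sublinearZ.
  by rewrite -[a]opprK scaleNr fN sublinearZ ?oppr_ge0 ?ltW // mulNr !opprK.
have f_scalar : scalar f by move=> c u w; rewrite fD fZ.
by exists (HB.pack_for {scalar V} f (GRing.isLinear.Build R V R *%R f f_scalar)).
Qed.

End HahnBanach.

Section LinearMinorant.
Variables (R : realType) (V : lmodType R) (N : V -> R) (S : V -> R -> Prop).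
Variables (b s0 : R).
Hypotheses (N_sublinear : sublinear N) (N_even : forall w, N (- w) = N w).
Hypothesis S_convex : forall w1 s1 w2 s2 t, 0 <= t <= 1 -> S w1 s1 -> S w2 s2 ->
  S (t *: w1 + (1 - t) *: w2) (t * s1 + (1 - t) * s2).
Hypothesis S0 : S 0 s0.
Hypothesis S_ge : forall w s, S w s -> - N w - b <= s.

(* [inf (E w)] is the infimal convolution of N with the positively homogeneous
   hull of (w, s) |-> s + b over S. *)
Let E w := [set z : R | exists t w' s u,
  [/\ 0 < t, S w' s, w = t *: w' + u & z = t * (s + b) + N u]].

Let E_ge w z : E w z -> - N w <= z.
Proof.
move=> [t [w' [s [u [t0 Sw' -> ->]]]]].
have := N_sublinear.1 (t *: w' + u) (- u).
rewrite addrK N_even (sublinearZ w' N_sublinear (ltW t0)) => tw'u.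
have := S_ge Sw'; rewrite -(ler_pM2l t0) mulrBr mulrN mulrDr; lra.
Qed.

Let E_inf w : has_inf (E w).
Proof.
split; last by exists (- N w); exact: E_ge.
by exists (1 * (s0 + b) + N w), 1, 0, s0, w; rewrite scaler0 add0r.
Qed.

Let E_add x y z1 z2 : E x z1 -> E y z2 -> exists2 z, E (x + y) z & z <= z1 + z2.
Proof.
move=> [t [w [s [u [t0 Sw -> ->]]]]] [t' [w' [s' [u' [t'0 Sw' -> ->]]]]].
have T0 : 0 < t + t' by rewrite addr_gt0.
pose m := t / (t + t'); have m01 : 0 <= m <= 1.
  by rewrite /m divr_ge0 ?(ltW t0) ?(ltW T0) //= ler_pdivrMr // mul1r lerDl ltW.
have m1 : 1 - m = t' / (t + t') by rewrite /m; field; rewrite gt_eqF.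
exists ((t + t') * (m * s + (1 - m) * s' + b) + N (u + u')).
  exists (t + t'), (m *: w + (1 - m) *: w'), (m * s + (1 - m) * s'), (u + u').
  split; [exact: T0 | exact: S_convex | | by []].
  rewrite scalerDr !scalerA m1 /m !(mulrC (t + t')) !divfK ?gt_eqF //.
  by rewrite addrACA.
have -> : (t + t') * (m * s + (1 - m) * s' + b) = t * (s + b) + t' * (s' + b).
  by rewrite m1 /m; field; rewrite gt_eqF.
by have := N_sublinear.1 u u'; lra.
Qed.

Let E_scale c x z : 0 < c -> E x z -> exists2 z', E (c *: x) z' & z' <= c * z.
Proof.
move=> c0 [t [w [s [u [t0 Sw -> ->]]]]].
exists ((c * t) * (s + b) + N (c *: u)); last first.
  by rewrite (sublinearZ u N_sublinear (ltW c0)) -mulrA -mulrDr.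
exists (c * t), w, s, (c *: u); split => //; first by rewrite mulr_gt0.
by rewrite scalerDr scalerA.
Qed.

Let q w := inf (E w).

Let q_sublinear : sublinear q. Proof. exact: sublinear_inf E_inf E_add E_scale. Qed.

Let q_le_N w : q w <= N w.
Proof.
have s0b : 0 <= s0 + b by have := S_ge S0; rewrite sublinear0 //; lra.
apply/ler_addgt0Pr => e e0; pose t := e / (s0 + b + 1).
have t0 : 0 < t by rewrite divr_gt0 // ltr_wpDl.
have Ew : E w (t * (s0 + b) + N w) by exists t, 0, s0, w; rewrite scaler0 add0r.
apply: le_trans (ge_inf (E_inf w).2 Ew) _; rewrite addrC lerD2l.
by rewrite /t mulrAC ler_pdivrMr ?ltr_wpDl //; nra.
Qed.

Let q_le_S w s : S w s -> q w <= s + b.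
Proof.
move=> Sws; have Ew : E w (1 * (s + b) + N 0).
  by exists 1, w, s, 0; rewrite scale1r addr0.
by apply: le_trans (ge_inf (E_inf w).2 Ew) _; rewrite mul1r sublinear0 ?addr0.
Qed.

Theorem linear_minorant_sublinear_convex : exists l : {scalar V},
  (forall w, `|l w| <= N w) /\ (forall w s, S w s -> l w <= s + b).
Proof.
have [l lq] := hahn_banach q_sublinear.
have lN w : l w <= N w := le_trans (lq w) (q_le_N w).
exists l; split=> [w|w s Sws]; last exact: le_trans (lq w) (q_le_S Sws).
by rewrite ler_norml lN lerNl -linearN -N_even lN.
Qed.

End LinearMinorant.

Lemma quadratic_lower_bound (R : realType) (A B d rho s : R) :
  0 <= A -> 0 <= B -> 0 <= d -> 0 < rho <= 1 ->
  (forall t, 0 < t <= 1 -> - (t * t) * (A * B) <= t * s + (1 - t) * d) ->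
  - (rho * A + d / rho * B) - d / rho <= s.
Proof.
move=> A0 B0 d0 /andP[rho0 rho1] ineq.
have B1 : 0 < B + 1 by lra.
pose t := rho / (B + 1); have t0 : 0 < t by rewrite divr_gt0.
have t1 : t <= 1 by rewrite /t ler_pdivrMr // mul1r; lra.
have := ineq t; rewrite t0 t1 => /(_ isT) ineqt.
rewrite -(ler_pM2l t0).
have -> : t * (- (rho * A + d / rho * B) - d / rho) = - (t * t * A) - t * t * A * B - d.
  by rewrite /t; field; rewrite !gt_eqF.
have t0' := ltW t0.
have := mulr_ge0 (mulr_ge0 t0' t0') A0; have := mulr_ge0 t0' d0.
rewrite mulrBl mul1r mulNr mulrA in ineqt; lra.
Qed.

Section ConjugateDomain.
Variables (R : realType) (X : normedModType R) (h : X * dual X -> \bar R).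
Hypothesis h_convex : convex_fun h.
Hypothesis h_ge : forall (x : X) (f : dual X), ((f x)%:E <= h (x, f))%E.
Variables (x0 : X) (x0s : dual X) (r : R).
Hypothesis hx0 : h (x0, x0s) = r%:E.

Let delta := r - x0s x0.

(* Since (x0s + w.2) (x0 + w.1) = x0s x0 + x0s w.1 + w.2 x0 + w.2 w.1, [S w s]
   says that h - <.,.> at (x0, x0s) + w is at most s - w.2 w.1. *)
Let S (w : X * dual X) (s : R) :=
  (h ((x0 + w.1)%R, (x0s + w.2)%R) <= (s + x0s x0 + x0s w.1 + w.2 x0)%:E)%E.

Let S_convex w1 s1 w2 s2 t : 0 <= t <= 1 -> S w1 s1 -> S w2 s2 ->
  S (t *: w1 + (1 - t) *: w2) (t * s1 + (1 - t) * s2).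
Proof.
move=> t01 Sw1 Sw2.
have := h_convex (f := x0s + (t *: w1.2 + (1 - t) *: w2.2)) t01 _ Sw1 Sw2.
have -> : t *: (x0 + w1.1) + (1 - t) *: (x0 + w2.1) =
    x0 + (t *: w1.1 + (1 - t) *: w2.1).
  by rewrite !scalerDr addrACA -scalerDl subrKC scale1r.
move=> /(_ _) hconv; apply: le_trans (hconv _) _ => [y /=|]; first ring.
by rewrite lee_fin /= !linearP linearZ /= le_eqVlt; apply/orP; left; apply/eqP; ring.
Qed.

Let delta_ge0 : 0 <= delta.
Proof. by have := h_ge x0 x0s; rewrite hx0 lee_fin /delta subr_ge0. Qed.

Let S0 : S 0 delta.
Proof. by rewrite /S /= !addr0 hx0 linear0 ?dual0 !addr0 /delta subrK. Qed.

Let S_coupling w s : S w s -> w.2 w.1 <= s.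
Proof.
move=> /(le_trans (h_ge _ _)); rewrite lee_fin /= !linearD /=; lra.
Qed.

Let S_ge w s t : S w s -> 0 < t <= 1 ->
  - (t * t) * (`|w.1| * dual_norm w.2) <= t * s + (1 - t) * delta.
Proof.
move=> Sws /andP[t0 t1].
have := S_coupling (S_convex (t := t) _ Sws S0).
rewrite t1 ltW //= => /(_ isT); rewrite scaler0 addr0 /= linearZ /= mulr0 addr0.
apply: le_trans; have tt0 := mulr_gt0 t0 t0.
have : - (`|w.1| * dual_norm w.2) <= w.2 w.1.
  by rewrite lerNl mulrC; apply: le_trans (ler_dual_norm _ _); rewrite -normrN ler_norm.
nra.
Qed.

Let weighted_norm (al be : R) (w : X * dual X) := al * `|w.1| + be * dual_norm w.2.

Let weighted_norm_sublinear al be :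
  0 <= al -> 0 <= be -> sublinear (weighted_norm al be).
Proof.
move=> al0 be0; split=> [[u1 g1] [u2 g2]|c [u g] c0]; rewrite /weighted_norm /=.
- have := ler_wpM2l al0 (ler_normD u1 u2).
  have := ler_wpM2l be0 (ler_dual_normD g1 g2); lra.
- rewrite normrZ gtr0_norm // mulrDr (mulrCA al) lerD2l (mulrCA c).
  by rewrite ler_wpM2l // ler_dual_normZ ?ltW.
Qed.

Let weighted_normN al be w : weighted_norm al be (- w) = weighted_norm al be w.
Proof. by rewrite /weighted_norm /= normrN dual_normN. Qed.

Let conj_dom_near (al be b : R) : 0 <= al -> 0 <= be ->
  (forall w s, S w s -> - weighted_norm al be w - b <= s) ->
  exists (f : dual X) (phi : bidual X), [/\ dom (fconj h) (f, phi),
    forall y, `|f y - x0s y| <= al * `|y| &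
    forall g, `|phi g - g x0| <= be * dual_norm g].
Proof.
move=> al0 be0 S_ge_N.
have [l [lN lS]] := linear_minorant_sublinear_convex
  (weighted_norm_sublinear al0 be0) (@weighted_normN al be) S_convex S0 S_ge_N.
have l1_lin : is_lin (fun y => l (y, 0)).
  move=> a y z; rewrite -linearP; congr (l _).
  by apply/pair_eqP; rewrite /= scaler0 addr0 !eqxx.
have l1_bound y : `|l (y, 0)| <= al * `|y|.
  by apply: le_trans (lN _) _; rewrite /weighted_norm /= dual_norm0 mulr0 addr0.
pose f := x0s + Dual l1_lin (is_lin_continuous l1_lin l1_bound).
have l2_bound g : `|l (0, g)| <= be * dual_norm g.
  by apply: le_trans (lN _) _; rewrite /weighted_norm /= normr0 mulr0 add0r.
pose phi_fun (g : dual X) := g x0 + l (0, g).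
have phi_lin a (g1 g2 g3 : dual X) : (forall x, g3 x = a * g1 x + g2 x) ->
    phi_fun g3 = a * phi_fun g1 + phi_fun g2.
  move=> g3E; have -> : g3 = a *: g1 + g2 by exact: dual_ext.
  rewrite /phi_fun.
  have -> : (0, a *: g1 + g2) = a *: (0, g1) + (0, g2) :> X * dual X.
    by apply/pair_eqP; rewrite /= scaler0 addr0 !eqxx.
  by rewrite linearP dualD dualZ; ring.
have phi_bounded : exists C, forall g, `|phi_fun g| <= C * dual_norm g.
  exists (`|x0| + be) => g; apply: le_trans (ler_normD _ _) _.
  by rewrite mulrDl lerD // mulrC ler_dual_norm.
exists f, (Bidual phi_lin phi_bounded); split.
- apply: le_lt_trans (ltry (x0s x0 + b + l (x0, x0s))).
  apply: ge_ereal_sup => _ [y [g ->]] /=.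
  have := h_ge y g; case hyg: (h (y, g)) => [z| |] //=; last by rewrite leNye.
  rewrite lee_fin -EFinB lee_fin => gyz.
  have Sw : S (y - x0, g - x0s) (z - x0s y - g x0 + x0s x0).
    rewrite /S /= !(addrC x0) !(addrC x0s) !subrK hyg lee_fin linearB /= mulN1r; lra.
  have := lS _ _ Sw.
  have -> : (y - x0, g - x0s) = (y, 0) + (0, g) - (x0, x0s) :> X * dual X.
    by apply/pair_eqP; rewrite /= addr0 add0r !eqxx.
  by rewrite linearB linearD /phi_fun /=; lra.
- by move=> y; rewrite /f dualD addrC addKr; exact: l1_bound.
- by move=> g; rewrite /= /phi_fun addrC addKr; exact: l2_bound.
Qed.

Lemma dom_fconj_fst_near rho : 0 < rho <= 1 ->
  exists2 f, (fst @` dom (fconj h)) f & forall y, `|f y - x0s y| <= rho * `|y|.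
Proof.
move=> rho01; have rho0 := ltW (andP rho01).1.
have [|f [phi [Dfphi fx0s _]]] :=
  @conj_dom_near rho (delta / rho) (delta / rho) rho0 (divr_ge0 delta_ge0 rho0).
  move=> w s Sws; rewrite /weighted_norm.
  apply: quadratic_lower_bound => //; first exact: dual_norm_ge0.
  by move=> t; exact: S_ge.
by exists f => //; exists (f, phi).
Qed.

Lemma dom_fconj_snd_near rho : 0 < rho <= 1 ->
  exists2 phi, (snd @` dom (fconj h)) phi &
    forall g, `|phi g - g x0| <= rho * dual_norm g.
Proof.
move=> rho01; have rho0 := ltW (andP rho01).1.
have [|f [phi [Dfphi _ phix0]]] :=
  @conj_dom_near (delta / rho) rho (delta / rho) (divr_ge0 delta_ge0 rho0) rho0.
  move=> w s Sws; rewrite /weighted_norm [delta / rho * _ + _]addrC.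
  apply: quadratic_lower_bound => //; first exact: dual_norm_ge0.
  by move=> t t01; rewrite (mulrC (dual_norm _)); exact: S_ge.
by exists phi => //; exists (f, phi).
Qed.

End ConjugateDomain.

Lemma exists_scale_lt (R : realType) (e M : R) : 0 < e -> 0 <= M ->
  exists rho, 0 < rho <= 1 /\ rho * M < e.
Proof.
move=> e0 M0; have eM1 : 0 < e + M + 1 by lra.
exists (e / (e + M + 1)); rewrite divr_gt0 ?ler_pdivrMr //= ?mul1r; split; first lra.
by rewrite mulrAC ltr_pdivrMr //; nra.
Qed.

Section WeakStarClosure.
Variables (R : realType) (X : normedModType R).

Lemma wstar_cl_norm_approx (A : set (dual X)) (f0 : dual X) :
  (forall rho, 0 < rho <= 1 ->
     exists2 f, A f & forall y, `|f y - f0 y| <= rho * `|y|) ->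
  wstar_cl A f0.
Proof.
move=> approx n xs e e0.
have M0 : 0 <= \sum_(i < n) `|xs i| by rewrite sumr_ge0.
have [rho [rho01 rhoM]] := exists_scale_lt e0 M0.
have [f Af f_near] := approx _ rho01.
exists f => // i; apply: le_lt_trans (f_near _) (le_lt_trans _ rhoM).
by rewrite ler_wpM2l ?(ltW (andP rho01).1) // (bigD1 i) //= lerDl sumr_ge0.
Qed.

Lemma in_wstar_cl_bid_norm_approx (A : set (bidual X)) (phi0 : dual X -> R) :
  (forall rho, 0 < rho <= 1 ->
     exists2 phi, A phi & forall g, `|phi g - phi0 g| <= rho * dual_norm g) ->
  in_wstar_cl_bid A phi0.
Proof.
move=> approx n gs e e0; have gs_ge0 i : 0 <= dual_norm (gs i) := dual_norm_ge0 _.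
have M0 : 0 <= \sum_(i < n) dual_norm (gs i) by rewrite sumr_ge0.
have [rho [rho01 rhoM]] := exists_scale_lt e0 M0.
have [phi Aphi phi_near] := approx _ rho01.
exists phi => // i; apply: le_lt_trans (phi_near _) (le_lt_trans _ rhoM).
by rewrite ler_wpM2l ?(ltW (andP rho01).1) // (bigD1 i) //= lerDl sumr_ge0.
Qed.

End WeakStarClosure.

Theorem lemma3p3 (R : realType) (X : completeNormedModType R)
    (h : X * dual X -> \bar R) :
  convex_fun h ->
  (forall (x : X) (f : dual X), ((f x)%:E <= h (x, f))%E) ->
  (snd @` dom h `<=` wstar_cl (fst @` dom (fconj h))) /\
  (forall x : X, (fst @` dom h) x ->
     in_wstar_cl_bid (snd @` dom (fconj h)) (fun f : dual X => f x)).
Proof.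
move=> h_convex h_ge.
have dom_fin p : dom h p -> exists r, h p = r%:E.
  case: p => x f; rewrite /dom /=; have := h_ge x f.
  by case: (h (x, f)) => // r; exists r.
split=> _ [[x0 x0s] /dom_fin[r hr] <-] /=.
- apply: wstar_cl_norm_approx; exact (dom_fconj_fst_near h_convex h_ge hr).
- apply: in_wstar_cl_bid_norm_approx; exact (dom_fconj_snd_near h_convex h_ge hr).
Qed.
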